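(* Fix $d,m\geq1$ and smooth vector fields $f^0,\dots,f^m$ on $\mathbb{R}^d$. For all exotic forests $\pi_d$, $\hat\pi_{\hat d}$ and all $\phi\in\mathcal{C}^\infty_P(\mathbb{R}^d)$, \[ F^{\mathrm{exo}}(\pi_d)\big[F^{\mathrm{exo}}(\hat\pi_{\hat d})[\phi]\big]=F^{\mathrm{exo}}(\pi_d\diamond\hat\pi_{\hat d})[\phi], \] where $F^{\mathrm{exo}}$ is extended linearly.
   Context: A forest $\pi=(V,E)$: finite node set, directed edges $(v,w)$ ($v$ a predecessor of $w$), each node with at most one outgoing edge, each connected component with exactly one root (node without outgoing edge); $\mathbf{1}$ is the empty forest. A decoration $d:V\to\mathbb{N}$ has $|d^{-1}(n)|\in\{0,2\}$ for $n>0$ in the exotic case (a pair of nodes with the same nonzero decoration is a liana); exotic forests are equivalence classes of such decorated graphs under edge-preserving node bijections that map decorations to decorations differing only by a relabelling of nonzero values (bijection of $\mathbb{N}$ fixing $0$). $F^{\mathrm{exo}}(\pi_d)[\phi](x)=\sum_{i_w\in\{1,\dots,d\},\,w\in V}\sum_{p_n\in\{1,\dots,m\},\,n\in d(V)\setminus\{0\}}\phi_{I_R}(x)\prod_{v\in V}f^{p_{d(v)},i_v}_{I_{\Pi(v)}}(x)$ with $p_0=0$, $R$ the roots, $\Pi(v)$ the predecessors of $v$, $\phi_{I_S}$ the partial derivative of $\phi$ in the indices $i_w,w\in S$, $f^{p,i}_{j_1\dots j_k}$ partial derivatives of the $i$-th component of $f^p$; $F^{\mathrm{exo}}(\mathbf{1})[\phi]=\phi$.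 The Grossman–Larson product $\pi_d\diamond\hat\pi_{\hat d}$ is the sum, over all maps $g$ from the set of roots of $\pi$ to $\hat V\cup\{\ast\}$, of the forest on $V\sqcup\hat V$ with edges $E\cup\hat E\cup\{(r,g(r)):g(r)\neq\ast\}$ and decoration equal to $d$ on $V$ and $\hat d$ on $\hat V$ after relabelling so that nonzero decorations of $\pi$ and $\hat\pi$ are distinct. $\mathcal{C}^\infty_P(\mathbb{R}^d)$: smooth functions with all derivatives polynomially bounded. *)

From HB Require Import structures.
From mathcomp Require Import all_boot all_order all_algebra.
From mathcomp Require Import all_classical all_reals all_analysis.
Set Implicit Arguments. Unset Strict Implicit. Unset Printing Implicit Defensive.
Import Order.TTheory GRing.Theory Num.Theory.
Import numFieldNormedType.Exports.
Local Open Scope ring_scope.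

Section Exotic.
Variables (R : realType) (d : nat).

Definition evec (j : 'I_d) : 'rV[R]_d := delta_mx 0 j.

Definition dpartial (s : seq 'I_d) (g : 'rV[R]_d -> R) : 'rV[R]_d -> R :=
  foldr (fun j h => fun x => derive h x (evec j)) g s.

Definition smooth (g : 'rV[R]_d -> R) : Prop :=
  forall s : seq 'I_d,
    continuous (dpartial s g) /\
    forall (j : 'I_d) (x : 'rV[R]_d), derivable (dpartial s g) x (evec j).

Definition smoothP (g : 'rV[R]_d -> R) : Prop :=
  smooth g /\
  forall s : seq 'I_d, exists (C : R) (k : nat),
    forall x : 'rV[R]_d, `|dpartial s g x| <= C * (1 + `|x|) ^+ k.

(* A decorated forest on the node set 'I_n is given by a parent map
   (par v = Some w iff (v,w) is an edge; None iff v is a root)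
   and a decoration dec : 'I_n -> nat. *)
Definition is_forest n (par : 'I_n -> option 'I_n) : Prop :=
  forall v : 'I_n, exists k : nat, iter k (fun o => obind par o) (Some v) = None.

Definition exotic_dec n (dec : 'I_n -> nat) : Prop :=
  forall k : nat, (0 < k)%N -> #|[set v | dec v == k]| \in [:: 0%N; 2%N].

Variable m : nat.
(* vector fields f^0, ..., f^m; f p i is the i-th component of f^p *)
Variable f : 'I_m.+1 -> 'I_d -> 'rV[R]_d -> R.

Definition preds n (par : 'I_n -> option 'I_n) (v : 'I_n) : seq 'I_n :=
  [seq w <- enum 'I_n | par w == Some v].
Definition roots n (par : 'I_n -> option 'I_n) : seq 'I_n :=
  [seq w <- enum 'I_n | par w == None].

(* q : 'I_n -> 'I_m gives, for each node, the value p_{d(v)} - 1 in {0..m-1};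
   it must only depend on the decoration (p is a function of the nonzero
   decorations); nodes with decoration 0 use p_0 = 0. *)
Definition liana_compatible n (dec : 'I_n -> nat) (q : {ffun 'I_n -> 'I_m}) : bool :=
  [forall v, forall w, ((dec v != 0%N) && (dec v == dec w)) ==> (q v == q w)].

Definition pval n (dec : 'I_n -> nat) (q : {ffun 'I_n -> 'I_m}) (v : 'I_n)
  : 'I_m.+1 :=
  if dec v == 0%N then ord0 else lift ord0 (q v).

Definition Fexo n (par : 'I_n -> option 'I_n) (dec : 'I_n -> nat)
  (phi : 'rV[R]_d -> R) : 'rV[R]_d -> R :=
  fun x =>
    \sum_(i : {ffun 'I_n -> 'I_d})
      \sum_(q : {ffun 'I_n -> 'I_m} | liana_compatible dec q)
        dpartial [seq i r | r <- roots par] phi x *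
        \prod_(v : 'I_n)
          dpartial [seq i w | w <- preds par v] (f (pval dec q v) (i v)) x.

(* Grossman--Larson product: for g mapping roots of pi to hat-nodes or * (None),
   the forest on 'I_(n + nh) = V \sqcup hatV *)
Definition gl_par n nh (par : 'I_n -> option 'I_n) (parh : 'I_nh -> option 'I_nh)
  (g : {ffun 'I_n -> option 'I_nh}) (k : 'I_(n + nh)) : option 'I_(n + nh) :=
  match fintype.split k with
  | inl v => match par v with
             | Some w => Some (lshift nh w)
             | None => omap (@rshift n nh) (g v)
             end
  | inr w => omap (@rshift n nh) (parh w)
  end.

(* decorations: keep dec on V, shift nonzero decorations of hat pi so that
   they are distinct from those of pi *)
Definition gl_dec n nh (dec : 'I_n -> nat) (dech : 'I_nh -> nat)
  (k : 'I_(n + nh)) : nat :=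
  match fintype.split k with
  | inl v => dec v
  | inr w => if dech w == 0%N then 0%N else addn (dech w) (\big[maxn/0%N]_(v : 'I_n) dec v)
  end.

(* g is only defined on roots: off the roots we take g v = None, i.e. the star *)
Definition root_map n nh (par : 'I_n -> option 'I_n)
  (g : {ffun 'I_n -> option 'I_nh}) : bool :=
  [forall v, (par v != None) ==> (g v == None)].

End Exotic.

From Pilot Require Import Defs.
From HB Require Import structures.
From mathcomp Require Import all_boot all_order all_algebra.
From mathcomp Require Import all_classical all_reals all_analysis.
Import Order.TTheory GRing.Theory Num.Theory.
Import numFieldNormedType.Exports.
Local Open Scope ring_scope.
Set Implicit Arguments. Unset Strict Implicit. Unset Printing Implicit Defensive.

(* Differentiating F^exo(hat pi)[phi] along the roots of pi obeys a Leibniz rule: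
   the derivative attached to a root r of pi falls either on phi or on the vector
   field of one node w of hat pi.  Recording this choice as g r = * or g r = w
   produces exactly the grafting maps g of the Grossman-Larson product.  In the
   grafted forest the roots and predecessor lists are the expected unions, and,
   since the nonzero decorations of hat pi are shifted past those of pi, the liana
   constraint splits into the constraints for pi and hat pi; what remains is a
   reordering of finite sums. *)

Section BigDerive.
Variables (R : numFieldType) (V : normedModType R) (x v : V).

Lemma derivable_big_sum (I : Type) (r : seq I) (P : pred I) (F : I -> V -> R) :
  (forall i, derivable (F i) x v) ->
  derivable (fun y => \sum_(i <- r | P i) F i y) x v.
Proof.
move=> dF; elim: r => [|a r IH].
  by under eq_fun do rewrite big_nil; exact: derivable_cst.
under eq_fun do rewrite big_cons.
by case: (P a) => //; exact: derivableD.
Qed.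

Lemma derive_big_sum (I : Type) (r : seq I) (P : pred I) (F : I -> V -> R) :
  (forall i, derivable (F i) x v) ->
  derive (fun y => \sum_(i <- r | P i) F i y) x v =
  \sum_(i <- r | P i) derive (F i) x v.
Proof.
move=> dF; elim: r => [|a r IH].
  by under eq_fun do rewrite big_nil; rewrite big_nil derive_cst.
under eq_fun do rewrite big_cons; rewrite big_cons.
case: (P a) => //; rewrite deriveD ?IH //.
exact: derivable_big_sum.
Qed.

Lemma derivable_big_prod (I : Type) (r : seq I) (F : I -> V -> R) :
  (forall i, derivable (F i) x v) ->
  derivable (fun y => \prod_(i <- r) F i y) x v.
Proof.
move=> dF; elim: r => [|a r IH].
  by under eq_fun do rewrite big_nil; exact: derivable_cst.
by under eq_fun do rewrite big_cons; exact: derivableM.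
Qed.

Lemma derive_big_prod (I : eqType) (r : seq I) (F : I -> V -> R) :
  uniq r -> (forall i, derivable (F i) x v) ->
  derive (fun y => \prod_(i <- r) F i y) x v =
  \sum_(i0 <- r) \prod_(i <- r) (if i == i0 then derive (F i) x v else F i x).
Proof.
move=> + dF; elim: r => [_|a r IH /= /andP[ar ur]].
  by under eq_fun do rewrite big_nil; rewrite big_nil derive_cst.
under eq_fun do rewrite big_cons.
rewrite deriveM ?IH //; last exact: derivable_big_prod.
rewrite big_cons big_cons eqxx.
have off_a i : i \in r -> (i == a) = false by apply: contraTF => /eqP ->.
rewrite [X in _ * X](eq_big_seq (fun i => F i x)); last by move=> i /off_a ->.
rewrite [X in _ = _ + X](eq_big_seq (fun i0 => F a x *
   \prod_(i <- r) (if i == i0 then derive (F i) x v else F i x))); last first.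
  by move=> i0 /off_a; rewrite big_cons eq_sym => ->.
by rewrite -mulr_sumr /GRing.scale /= addrC mulrC.
Qed.

End BigDerive.

Section IteratedPartials.
Variables (R : realType) (d : nat).
Local Notation V := 'rV[R]_d.

Lemma dpartial_cat s1 s2 (h : V -> R) :
  dpartial (s1 ++ s2) h = dpartial s1 (dpartial s2 h).
Proof. by rewrite /dpartial foldr_cat. Qed.

Definition infinitely_derivable (h : V -> R) :=
  forall s j x, derivable (dpartial s h) x (evec R j).

Lemma smooth_infinitely_derivable h : smooth h -> infinitely_derivable h.
Proof. by move=> sh s j x; exact: (sh s).2. Qed.

Lemma infinitely_derivable_dpartial s h :
  infinitely_derivable h -> infinitely_derivable (dpartial s h).
Proof. by move=> dh s' j x; rewrite -dpartial_cat; exact: dh. Qed.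

(* Closure under products is proved for the algebra generated by the
   infinitely derivable functions, which is visibly stable under each
   partial derivative. *)
Inductive derivable_alg : (V -> R) -> Prop :=
| derivable_alg_base h : infinitely_derivable h -> derivable_alg h
| derivable_alg_cst c : derivable_alg (fun _ => c)
| derivable_alg_add a b :
    derivable_alg a -> derivable_alg b -> derivable_alg (fun x => a x + b x)
| derivable_alg_mul a b :
    derivable_alg a -> derivable_alg b -> derivable_alg (fun x => a x * b x).

Lemma derivable_alg_derive h j : derivable_alg h ->
  (forall x, derivable h x (evec R j)) /\
  derivable_alg (fun x => derive h x (evec R j)).
Proof.
move=> ah; elim: ah j => {h}.
- move=> h dh j; split=> [x|]; first exact: (dh [::] j x).
  apply: derivable_alg_base => s j' x.
  by have := dh (s ++ [:: j]) j' x; rewrite dpartial_cat.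
- move=> c j; split=> [x|]; first exact: derivable_cst.
  under eq_fun do rewrite derive_cst; exact: derivable_alg_cst.
- move=> a b _ IHa _ IHb j.
  have [da aa] := IHa j; have [db ab] := IHb j; split=> [x|].
    exact: derivableD.
  by under eq_fun do rewrite deriveD //; exact: derivable_alg_add.
- move=> a b Aa IHa Ab IHb j.
  have [da aa] := IHa j; have [db ab] := IHb j; split=> [x|].
    exact: derivableM.
  under eq_fun do rewrite deriveM //.
  by apply: derivable_alg_add; apply: derivable_alg_mul.
Qed.

Lemma derivable_alg_infinitely_derivable h :
  derivable_alg h -> infinitely_derivable h.
Proof.
move=> ah s j x; suff As : derivable_alg (dpartial s h).
  exact: (derivable_alg_derive j As).1 x.
elim: s => [|j' s IH] //=; exact: (derivable_alg_derive j' IH).2.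
Qed.

Lemma infinitely_derivable_cst c : infinitely_derivable (fun _ => c).
Proof. exact/derivable_alg_infinitely_derivable/derivable_alg_cst. Qed.

Lemma infinitely_derivableD a b :
  infinitely_derivable a -> infinitely_derivable b ->
  infinitely_derivable (fun x => a x + b x).
Proof.
by move=> da db; apply/derivable_alg_infinitely_derivable/derivable_alg_add;
  apply: derivable_alg_base.
Qed.

Lemma infinitely_derivableM a b :
  infinitely_derivable a -> infinitely_derivable b ->
  infinitely_derivable (fun x => a x * b x).
Proof.
by move=> da db; apply/derivable_alg_infinitely_derivable/derivable_alg_mul;
  apply: derivable_alg_base.
Qed.

Lemma infinitely_derivable_big_sum (I : Type) (r : seq I) (P : pred I)
    (F : I -> V -> R) :
  (forall i, infinitely_derivable (F i)) ->
  infinitely_derivable (fun x => \sum_(i <- r | P i) F i x).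
Proof.
move=> dF; elim: r => [|a r IH].
  by under eq_fun do rewrite big_nil; exact: infinitely_derivable_cst.
under eq_fun do rewrite big_cons.
by case: (P a) => //; exact: infinitely_derivableD.
Qed.

Lemma infinitely_derivable_big_prod (I : Type) (r : seq I) (F : I -> V -> R) :
  (forall i, infinitely_derivable (F i)) ->
  infinitely_derivable (fun x => \prod_(i <- r) F i x).
Proof.
move=> dF; elim: r => [|a r IH].
  by under eq_fun do rewrite big_nil; exact: infinitely_derivable_cst.
by under eq_fun do rewrite big_cons; exact: infinitely_derivableM.
Qed.

Lemma dpartial_big_sum (I : Type) (r : seq I) (P : pred I) (F : I -> V -> R) s :
  (forall i, infinitely_derivable (F i)) ->
  dpartial s (fun x => \sum_(i <- r | P i) F i x) =
  fun x => \sum_(i <- r | P i) dpartial s (F i) x.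
Proof.
move=> dF; elim: s => [|j s IH] //=; rewrite IH.
by apply: funext => x; rewrite derive_big_sum // => i; exact: (dF i s).
Qed.

Lemma infinitely_derivable_monomial (K : finType) (F : K -> V -> R) (h : V -> R)
    s (t : K -> seq 'I_d) :
  infinitely_derivable h -> (forall k, infinitely_derivable (F k)) ->
  infinitely_derivable (fun x => dpartial s h x * \prod_k dpartial (t k) (F k) x).
Proof.
move=> dh dF; apply: infinitely_derivableM; first exact: infinitely_derivable_dpartial.
by apply: infinitely_derivable_big_prod => k; exact: infinitely_derivable_dpartial.
Qed.

End IteratedPartials.

Definition supported_on (T : finType) (K : eqType) (k0 : K) (s : seq T)
    (a : {ffun T -> K}) : bool :=
  [forall v, (v \notin s) ==> (a v == k0)].

Lemma supported_on_nil (T : finType) (K : eqType) (k0 : K) (a : {ffun T -> K}) :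
  supported_on k0 [::] a = (a == [ffun => k0]).
Proof.
apply/forallP/eqP => [a0|-> v]; last by rewrite ffunE eqxx implybT.
by apply/ffunP => v; rewrite ffunE; exact/eqP/(implyP (a0 v)).
Qed.

Lemma big_supported_on_cons (M : nmodType) (T K : finType) (k0 : K) r s
    (H : {ffun T -> K} -> M) :
  r \notin s ->
  \sum_(a | supported_on k0 (r :: s) a) H a =
  \sum_(k : K) \sum_(a | supported_on k0 s a)
     H [ffun v => if v == r then k else a v].
Proof.
move=> rs; rewrite (partition_big (fun a : {ffun T -> K} => a r) xpredT) //.
apply: eq_bigr => k _.
pose upd (a : {ffun T -> K}) k := [ffun v => if v == r then k else a v].
rewrite (reindex_onto (upd ^~ k) (upd ^~ k0)) => [|a /andP[_ /eqP ar]]; last first.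
  by apply/ffunP => v; rewrite !ffunE; case: eqVneq => // ->.
apply: eq_bigl => a; rewrite /upd ffunE !eqxx andbT.
apply/andP/idP => [[/forallP supp /eqP e]|/forallP supp].
  have ar : a r = k0 by rewrite -e !ffunE eqxx.
  apply/forallP => v; apply/implyP => vs; case: (eqVneq v r) => [->|vr].
    by rewrite ar.
  by have := implyP (supp v); rewrite ffunE inE negb_or vr vs (negbTE vr); apply.
have ar : a r = k0 by apply/eqP/(implyP (supp r)).
split; last by apply/eqP/ffunP => v; rewrite !ffunE; case: eqVneq => // ->.
apply/forallP => v; rewrite inE negb_or ffunE.
by apply/implyP => /andP[/negbTE -> /(implyP (supp v))].
Qed.

Section Leibniz.
Variables (R : realType) (d : nat) (T K : finType) (k0 : K).
Variables (F : K -> 'rV[R]_d -> R) (i : T -> 'I_d).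
Hypothesis dF : forall k, infinitely_derivable (F k).

Lemma dpartial_big_prod s x : uniq s ->
  dpartial (map i s) (fun y => \prod_k F k y) x =
  \sum_(a | supported_on k0 s a)
    \prod_k dpartial (map i [seq r <- s | a r == k]) (F k) x.
Proof.
elim: s x => [|r s IH] x.
  by move=> _; rewrite (big_pred1 [ffun => k0]) // => a; rewrite supported_on_nil.
move=> /andP[rs us] /=; rewrite (funext (IH ^~ us)).
have dD (a : {ffun T -> K}) k :
    derivable (dpartial (map i [seq r <- s | a r == k]) (F k)) x (evec R (i r)).
  exact: dF.
rewrite derive_big_sum => [|a]; last exact: derivable_big_prod.
rewrite (eq_bigr _ (fun a _ => derive_big_prod (index_enum_uniq K) (dD a))).
rewrite exchange_big big_supported_on_cons //; apply: eq_bigr => k1 _.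
apply: eq_bigr => a _; apply: eq_bigr => k _ /=.
have -> : [seq r' <- s | [ffun v => if v == r then k1 else a v] r' == k] =
          [seq r' <- s | a r' == k].
  apply: eq_in_filter => v vs; rewrite ffunE.
  by case: (eqVneq v r) => // vr; rewrite -vr vs in rs.
by rewrite ffunE eqxx eq_sym; case: (k1 == k).
Qed.

End Leibniz.

Section OrdSplit.
Variables (n nh : nat).

Lemma split_lshift (v : 'I_n) : fintype.split (lshift nh v) = inl v.
Proof. exact: (@unsplitK n nh (inl v)). Qed.

Lemma split_rshift (w : 'I_nh) : fintype.split (@rshift n nh w) = inr w.
Proof. exact: (@unsplitK n nh (inr w)). Qed.

Lemma enum_ord_add :
  enum 'I_(n + nh) = map (lshift nh) (enum 'I_n) ++ map (@rshift n nh) (enum 'I_nh).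
Proof.
apply: (inj_map val_inj); rewrite map_cat val_enum_ord iotaD add0n.
rewrite -(map_comp val (lshift nh)) -(map_comp val (@rshift n nh)).
congr (_ ++ _); first by rewrite (eq_map (_ : val \o lshift nh =1 val)) // val_enum_ord.
rewrite (eq_map (_ : val \o @rshift n nh =1 addn n \o val)) //.
by rewrite map_comp val_enum_ord -iotaDl addn0.
Qed.

Lemma filter_enum_ord_add (P : pred 'I_(n + nh)) :
  [seq k <- enum 'I_(n + nh) | P k] =
  map (lshift nh) [seq v <- enum 'I_n | P (lshift nh v)] ++
  map (@rshift n nh) [seq w <- enum 'I_nh | P (@rshift n nh w)].
Proof. by rewrite enum_ord_add filter_cat !filter_map. Qed.

Definition ffun_cat (T : Type) (a : {ffun 'I_n -> T}) (b : {ffun 'I_nh -> T}) :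
    {ffun 'I_(n + nh) -> T} :=
  [ffun k => match fintype.split k with inl v => a v | inr w => b w end].

Variables (T : Type) (a : {ffun 'I_n -> T}) (b : {ffun 'I_nh -> T}).

Lemma ffun_cat_lshift v : ffun_cat a b (lshift nh v) = a v.
Proof. by rewrite ffunE split_lshift. Qed.

Lemma ffun_cat_rshift w : ffun_cat a b (@rshift n nh w) = b w.
Proof. by rewrite ffunE split_rshift. Qed.

Lemma map_ffun_cat_lshift s :
  [seq ffun_cat a b k | k <- map (lshift nh) s] = map a s.
Proof. by rewrite -map_comp; apply: eq_map => v /=; rewrite ffun_cat_lshift. Qed.

Lemma map_ffun_cat_rshift s :
  [seq ffun_cat a b k | k <- map (@rshift n nh) s] = map b s.
Proof. by rewrite -map_comp; apply: eq_map => w /=; rewrite ffun_cat_rshift. Qed.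

End OrdSplit.

Lemma big_ffun_cat (M : nmodType) (T : finType) n nh
    (P : pred {ffun 'I_(n + nh) -> T}) (G : {ffun 'I_(n + nh) -> T} -> M) :
  \sum_(c | P c) G c =
  \sum_(a : {ffun 'I_n -> T}) \sum_(b : {ffun 'I_nh -> T} | P (ffun_cat a b))
    G (ffun_cat a b).
Proof.
rewrite pair_big_dep (reindex (fun ab => ffun_cat ab.1 ab.2)) //; apply: onW_bij.
exists (fun c : {ffun 'I_(n + nh) -> T} =>
  ([ffun v => c (lshift nh v)], [ffun w => c (@rshift n nh w)])).
  move=> [a b] /=; congr (_, _); apply/ffunP => v;
  by rewrite ffunE ?ffun_cat_lshift ?ffun_cat_rshift.
move=> c; apply/ffunP => k; rewrite ffunE.
by case: split_ordP => v -> /=; rewrite ffunE.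
Qed.

Lemma big_option (M : Type) (idx : M) (op : Monoid.com_law idx) (T : finType)
    (G : option T -> M) :
  \big[op/idx]_(o : option T) G o = op (G None) (\big[op/idx]_(w : T) G (Some w)).
Proof.
rewrite (perm_big (None :: map Some (index_enum T))) ?big_cons ?big_map //.
apply: uniq_perm; first exact: index_enum_uniq.
  rewrite /= (map_inj_uniq (@Some_inj _)) index_enum_uniq andbT.
  by apply/mapP => -[].
by case=> [w|]; rewrite !mem_index_enum //= inE /= map_f ?mem_index_enum.
Qed.

Section GraftedForest.
Variables (n nh : nat) (par : 'I_n -> option 'I_n) (parh : 'I_nh -> option 'I_nh).
Variable g : {ffun 'I_n -> option 'I_nh}.
Local Notation gp := (gl_par par parh g).

Lemma root_mapE : root_map par g = supported_on None (Defs.roots par) g.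
Proof.
by apply: eq_forallb => v; rewrite mem_filter mem_enum andbT.
Qed.

Lemma gl_par_lshift v : gp (lshift nh v) =
  if par v is Some w then Some (lshift nh w) else omap (@rshift n nh) (g v).
Proof. by rewrite /gl_par split_lshift. Qed.

Lemma gl_par_rshift w : gp (@rshift n nh w) = omap (@rshift n nh) (parh w).
Proof. by rewrite /gl_par split_rshift. Qed.

Lemma roots_gl_par :
  Defs.roots gp = map (lshift nh) [seq r <- Defs.roots par | g r == None] ++
             map (@rshift n nh) (Defs.roots parh).
Proof.
rewrite /Defs.roots filter_enum_ord_add; congr (_ ++ _); congr map.
  rewrite -(filter_predI (fun r => g r == None)).
  by apply: eq_filter => v /=; rewrite gl_par_lshift; case: (par v); case: (g v).
by apply: eq_filter => w /=; rewrite gl_par_rshift; case: (parh w).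
Qed.

Lemma preds_gl_par_lshift v :
  preds gp (lshift nh v) = map (lshift nh) (preds par v).
Proof.
rewrite /preds filter_enum_ord_add.
rewrite [X in _ ++ map _ X](@eq_filter _ _ pred0) ?filter_pred0 ?cats0 => [|w].
  congr map; apply: eq_filter => u; rewrite gl_par_lshift.
  case: (par u) => [w|]; first by rewrite !eqE /= eq_lshift.
  by case: (g u) => //= w; rewrite !eqE /= eq_rlshift.
by rewrite gl_par_rshift; case: (parh w) => //= u; rewrite !eqE /= eq_rlshift.
Qed.

Lemma preds_gl_par_rshift w :
  preds gp (@rshift n nh w) =
  map (lshift nh) [seq r <- Defs.roots par | g r == Some w] ++
  map (@rshift n nh) (preds parh w).
Proof.
rewrite /preds /Defs.roots filter_enum_ord_add; congr (_ ++ _); congr map.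
  rewrite -(filter_predI (fun r => g r == Some w)); apply: eq_filter => u /=.
  rewrite gl_par_lshift; case: (par u) => [u'|].
    by rewrite !eqE /= eq_lrshift andbF.
  by case: (g u) => [u'|] //=; rewrite !eqE /= eq_rshift andbT.
apply: eq_filter => u.
by rewrite gl_par_rshift; case: (parh u) => [u'|] //=; rewrite !eqE /= eq_rshift.
Qed.

End GraftedForest.

Section GraftedDecoration.
Variables (n nh : nat) (dec : 'I_n -> nat) (dech : 'I_nh -> nat).
Local Notation gd := (gl_dec dec dech).

Lemma gl_dec_lshift v : gd (lshift nh v) = dec v.
Proof. by rewrite /gl_dec split_lshift. Qed.

Lemma gl_dec_rshift_eq0 w : (gd (@rshift n nh w) == 0)%N = (dech w == 0)%N.
Proof.
rewrite /gl_dec split_rshift /=; case: (eqVneq (dech w) 0%N) => [_|dw0] //.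
by rewrite addn_eq0 (negbTE dw0).
Qed.

Lemma gl_dec_rshift_eq w w' : dech w != 0%N ->
  (gd (@rshift n nh w) == gd (@rshift n nh w')) = (dech w == dech w').
Proof.
move=> dw0; rewrite /gl_dec !split_rshift /= (negbTE dw0).
case: (eqVneq (dech w') 0%N) => [->|_] /=; last by rewrite eqn_add2r.
by rewrite addn_eq0 (negbTE dw0).
Qed.

Lemma gl_dec_lt v w : dech w != 0%N -> (dec v < gd (@rshift n nh w))%N.
Proof.
move=> dw0; rewrite /gl_dec split_rshift /= (negbTE dw0).
by rewrite (leq_ltn_trans (leq_bigmax v)) // -[X in (X < _)%N]add0n ltn_add2r lt0n.
Qed.

Variables (m : nat) (q : {ffun 'I_n -> 'I_m}) (qh : {ffun 'I_nh -> 'I_m}).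

Lemma pval_gl_lshift v : pval gd (ffun_cat q qh) (lshift nh v) = pval dec q v.
Proof. by rewrite /pval gl_dec_lshift ffun_cat_lshift. Qed.

Lemma pval_gl_rshift w : pval gd (ffun_cat q qh) (@rshift n nh w) = pval dech qh w.
Proof. by rewrite /pval gl_dec_rshift_eq0 ffun_cat_rshift. Qed.

Lemma liana_compatible_gl :
  liana_compatible gd (ffun_cat q qh) =
  liana_compatible dec q && liana_compatible dech qh.
Proof.
apply/forallP/andP => [compat|[/forallP cq /forallP cqh] k].
  split; apply/forallP => v; apply/forallP => w.
    by have := forallP (compat (lshift nh v)) (lshift nh w);
      rewrite !gl_dec_lshift !ffun_cat_lshift.
  have := forallP (compat (@rshift n nh v)) (@rshift n nh w).
  rewrite !ffun_cat_rshift gl_dec_rshift_eq0.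
  by case: (eqVneq (dech v) 0%N) => // dv0; rewrite gl_dec_rshift_eq.
apply/forallP => k'; case: (split_ordP k) => v ->; case: (split_ordP k') => w ->.
- by rewrite !gl_dec_lshift !ffun_cat_lshift; exact: forallP (cq v) w.
- rewrite gl_dec_lshift; apply/implyP => /andP[dv0 /eqP dvw].
  have dw0 : dech w != 0%N by rewrite -gl_dec_rshift_eq0 -dvw.
  by have := gl_dec_lt v dw0; rewrite -dvw ltnn.
- rewrite gl_dec_lshift gl_dec_rshift_eq0; apply/implyP => /andP[dv0 /eqP dvw].
  by have := gl_dec_lt w dv0; rewrite dvw ltnn.
- rewrite !ffun_cat_rshift gl_dec_rshift_eq0.
  case: (eqVneq (dech v) 0%N) => //= dv0; rewrite gl_dec_rshift_eq //.
  by have := forallP (cqh v) w; rewrite dv0.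
Qed.

End GraftedDecoration.

Section ExoticOperators.
Variables (R : realType) (d m : nat) (f : 'I_m.+1 -> 'I_d -> 'rV[R]_d -> R).
Hypothesis df : forall p i, infinitely_derivable (f p i).
Variables (n : nat) (par : 'I_n -> option 'I_n) (dec : 'I_n -> nat).
Variables (nh : nat) (parh : 'I_nh -> option 'I_nh) (dech : 'I_nh -> nat).
Variable phi : 'rV[R]_d -> R.
Hypothesis dphi : infinitely_derivable phi.

Definition grafted_term (i : {ffun 'I_n -> 'I_d}) (ih : {ffun 'I_nh -> 'I_d})
    (qh : {ffun 'I_nh -> 'I_m}) (g : {ffun 'I_n -> option 'I_nh}) x : R :=
  dpartial ([seq i r | r <- Defs.roots par & g r == None] ++
            [seq ih r | r <- Defs.roots parh]) phi x *
  \prod_w dpartial ([seq i r | r <- Defs.roots par & g r == Some w] ++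
                    [seq ih u | u <- preds parh w]) (f (pval dech qh w) (ih w)) x.

Lemma dpartial_roots_Fexo (i : {ffun 'I_n -> 'I_d}) x :
  dpartial [seq i r | r <- Defs.roots par] (Fexo f parh dech phi) x =
  \sum_(ih : {ffun 'I_nh -> 'I_d}) \sum_(qh | liana_compatible dech qh)
    \sum_(g | root_map par g) grafted_term i ih qh g x.
Proof.
rewrite /Fexo dpartial_big_sum => [|ih]; last first.
  by apply: infinitely_derivable_big_sum => qh; exact: infinitely_derivable_monomial.
apply: eq_bigr => ih _.
rewrite dpartial_big_sum => [|qh]; last exact: infinitely_derivable_monomial.
apply: eq_bigr => qh _.
pose Fo (o : option 'I_nh) := if o is Some w
  then dpartial [seq ih u | u <- preds parh w] (f (pval dech qh w) (ih w))
  else dpartial [seq ih r | r <- Defs.roots parh] phi.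
have dFo o : infinitely_derivable (Fo o).
  by case: o => [w|]; exact: infinitely_derivable_dpartial.
rewrite (_ : (fun y => _ * _) = fun y => \prod_o Fo o y); last first.
  by apply: funext => y; rewrite big_option.
rewrite (dpartial_big_prod None i dFo x (filter_uniq _ (enum_uniq _))).
apply: eq_big => [g|g _]; first by rewrite root_mapE.
rewrite big_option /grafted_term dpartial_cat; congr (_ * _).
by apply: eq_bigr => w _; rewrite dpartial_cat.
Qed.

Lemma Fexo_gl_par (g : {ffun 'I_n -> option 'I_nh}) x :
  Fexo f (gl_par par parh g) (gl_dec dec dech) phi x =
  \sum_(i : {ffun 'I_n -> 'I_d}) \sum_(ih : {ffun 'I_nh -> 'I_d})
  \sum_(q | liana_compatible dec q) \sum_(qh | liana_compatible dech qh)
    \prod_v dpartial [seq i u | u <- preds par v] (f (pval dec q v) (i v)) x *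
    grafted_term i ih qh g x.
Proof.
rewrite /Fexo big_ffun_cat; apply: eq_bigr => i _; apply: eq_bigr => ih _.
rewrite big_ffun_cat [RHS]big_mkcond; apply: eq_bigr => q _.
rewrite (eq_bigl _ _ (liana_compatible_gl dec dech q)).
case: (liana_compatible dec q); last by rewrite big_pred0.
apply: eq_bigr => qh _.
rewrite roots_gl_par map_cat map_ffun_cat_lshift map_ffun_cat_rshift big_split_ord.
rewrite /grafted_term mulrCA; congr (_ * (_ * _)); apply: eq_bigr => k _.
  by rewrite preds_gl_par_lshift map_ffun_cat_lshift pval_gl_lshift ffun_cat_lshift.
rewrite preds_gl_par_rshift map_cat map_ffun_cat_lshift map_ffun_cat_rshift.
by rewrite pval_gl_rshift ffun_cat_rshift.
Qed.

End ExoticOperators.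

Theorem mainTheorem5 (R : realType) (d m : nat) (hd : (1 <= d)%N) (hm : (1 <= m)%N)
  (f : 'I_m.+1 -> 'I_d -> 'rV[R]_d -> R)
  (hf : forall p i, smooth (f p i))
  (n : nat) (par : 'I_n -> option 'I_n) (dec : 'I_n -> nat)
  (hpar : is_forest par) (hdec : exotic_dec dec)
  (nh : nat) (parh : 'I_nh -> option 'I_nh) (dech : 'I_nh -> nat)
  (hparh : is_forest parh) (hdech : exotic_dec dech)
  (phi : 'rV[R]_d -> R) (hphi : smoothP phi) (x : 'rV[R]_d) :
  Fexo f par dec (Fexo f parh dech phi) x =
  \sum_(g : {ffun 'I_n -> option 'I_nh} | root_map par g)
    Fexo f (gl_par par parh g) (gl_dec dec dech) phi x.
Proof.
have df p i := smooth_infinitely_derivable (hf p i).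
have dphi := smooth_infinitely_derivable hphi.1.
under [RHS]eq_bigr => g _ do rewrite Fexo_gl_par.
(* bring both sides to the summation order i, q, ih, qh, g *)
rewrite [RHS]exchange_big /Fexo; apply: eq_bigr => i _.
rewrite [RHS]exchange_big.
under [RHS]eq_bigr => ih _ do rewrite exchange_big.
under [RHS]eq_bigr => ih _ do under eq_bigr => q _ do rewrite exchange_big.
rewrite [RHS]exchange_big; apply: eq_bigr => q _.
rewrite (dpartial_roots_Fexo df _ _ _ dphi) mulr_suml; apply: eq_bigr => ih _.
rewrite mulr_suml; apply: eq_bigr => qh _.
by rewrite mulr_suml; apply: eq_bigr => g _; rewrite mulrC.
Qed.
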